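(* For each $n\ge 0$ there is a bijection $\phi$ from the set of Dyck $n$-paths to itself such that: (1) for every Dyck path $P$, the number of valleys $DU$ in $P$ equals the number of occurrences of $DXD$ in $\phi(P)$; (2) $\phi$ restricts to a bijection from the Dyck $n$-paths whose terminal descent has even length (including the empty path) onto the hill-free Dyck $n$-paths; (3) $\phi$ restricts to a bijection from the nonempty Dyck $n$-paths all of whose descents to ground level have odd length onto the Dyck $n$-paths that start $UD$.
   Context: A Dyck $n$-path is a path from $(0,0)$ to $(2n,0)$ with $n$ upsteps $U=(1,1)$ and $n$ downsteps $D=(1,-1)$ never going below the $x$-axis, written as a word in $U,D$. A valley is an occurrence of $DU$; a $DXD$ is an occurrence of $DUD$ or $DDD$ as consecutive steps. A descent is a maximal run of consecutive $D$s; the terminal descent is the last descent (length $0$ for the empty path). A descent to ground level is a descent ending on the $x$-axis. A hill is a peak $UD$ whose top vertex is at height $1$; a path is hill-free if it has no hills. *)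

From mathcomp Require Import all_boot.
Set Implicit Arguments. Unset Strict Implicit. Unset Printing Implicit Defensive.

(* A lattice path is a word in U, D encoded as seq bool: true = U, false = D. *)

Fixpoint dyck_from (h : nat) (s : seq bool) : bool :=
  match s with
  | [::] => h == 0
  | true :: t => dyck_from h.+1 t
  | false :: t => (0 < h) && dyck_from h.-1 t
  end.

Definition is_dyck (n : nat) (s : seq bool) : bool :=
  (size s == 2 * n) && dyck_from 0 s.

Fixpoint count_valleys (s : seq bool) : nat :=
  match s with
  | [::] => 0
  | a :: t =>
      (match t with b :: _ => (~~ a && b : nat) | [::] => 0 end) + count_valleys t
  end.

Fixpoint count_DXD (s : seq bool) : nat :=
  match s with
  | [::] => 0
  | a :: t =>
      (match t with _ :: c :: _ => (~~ a && ~~ c : nat) | _ => 0 end) + count_DXD t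
  end.

Definition terminal_descent (s : seq bool) : nat := find id (rev s).

Fixpoint has_hill (h : nat) (s : seq bool) : bool :=
  match s with
  | [::] => false
  | true :: t =>
      ((h == 0) && (match t with false :: _ => true | _ => false end))
      || has_hill h.+1 t
  | false :: t => has_hill h.-1 t
  end.

Definition hill_free (s : seq bool) : bool := ~~ has_hill 0 s.

(* [ground_descents h r s]: lengths of the descents (maximal runs of D) ending on
   the x-axis; h = current height, r = length of the current run of D's. *)
Fixpoint ground_descents (h r : nat) (s : seq bool) : seq nat :=
  match s with
  | [::] => if (0 < r) && (h == 0) then [:: r] else [::]
  | true :: t => (if (0 < r) && (h == 0) then [:: r] else [::])
                   ++ ground_descents h.+1 0 t
  | false :: t => ground_descents h.-1 r.+1 t
  end.

Definition all_ground_descents_odd (s : seq bool) : bool :=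
  all odd (ground_descents 0 0 s).

Definition starts_UD (s : seq bool) : bool := take 2 s == [:: true; false].

Example ex1 : count_valleys [:: true; false; true; false] = 1. Proof. by []. Qed.
Example ex2 : count_DXD [:: true; true; false; false; false; false] = 2. Proof. by []. Qed.
Example ex3 : count_DXD [:: true; true; false; true; false; false] = 1. Proof. by []. Qed.
Example ex4 : terminal_descent [:: true; true; false; false] = 2. Proof. by []. Qed.
Example ex5 : hill_free [:: true; true; false; false] && ~~ hill_free [:: true; true; false; false; true; false]. Proof. by []. Qed.
Example ex6 : ground_descents 0 0 [:: true; true; false; true; false; false; true; false] = [:: 2; 1]. Proof. by []. Qed.

(* A Dyck path is the code of a binary tree in two ways.  The last-return
   decomposition P = E U C D gives a bijection [arch_code] from binary trees
   with n nodes onto Dyck n-paths, under which valleys come from nodes with a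
   nonempty left subtree, the terminal descent is the right spine, and the
   ground descents are one more than the spines of the right subtrees met
   along the left branch.  The second code [hill_code] writes the tree (E, C)
   as code(E) UD code(C) when C has an even spine, and as U code(E, E') D code(C')
   when C = (E', C') has an odd spine.  In it the nodes with a nonempty left
   subtree become the DXD's, the code has a hill exactly when the spine is odd,
   and it starts with UD exactly when the tree is nonempty with all its ground
   spines even.  The bijection is hill_code after the inverse of arch_code: it
   is onto (split a path at its last hill, or at its first return when it has
   no hill), hence one-to-one, as it maps a finite set to itself. *)

From mathcomp Require Import all_boot zify.
From Stdlib Require Import ClassicalEpsilon.
Set Implicit Arguments. Unset Strict Implicit. Unset Printing Implicit Defensive.

Fixpoint stays_nonneg (h : nat) (s : seq bool) : bool :=
  match s with
  | [::] => true
  | true :: t => stays_nonneg h.+1 t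
  | false :: t => (0 < h) && stays_nonneg h.-1 t
  end.

Fixpoint end_height (h : nat) (s : seq bool) : nat :=
  match s with
  | [::] => h
  | true :: t => end_height h.+1 t
  | false :: t => end_height h.-1 t
  end.

Lemma dyck_fromE h s : dyck_from h s = stays_nonneg h s && (end_height h s == 0).
Proof. by elim: s h => [|[] s IH] h //=; rewrite IH // andbA. Qed.

Lemma dyck_from_cat h s t :
  dyck_from h (s ++ t) = stays_nonneg h s && dyck_from (end_height h s) t.
Proof. by elim: s h => [|[] s IH] h //=; rewrite IH // andbA. Qed.

Lemma end_height_cat h s t : end_height h (s ++ t) = end_height (end_height h s) t.
Proof. by elim: s h => [|[] s IH] h //=. Qed.

Lemma stays_nonneg_cat h s t :
  stays_nonneg h (s ++ t) = stays_nonneg h s && stays_nonneg (end_height h s) t.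
Proof. by elim: s h => [|[] s IH] h //=; rewrite IH // andbA. Qed.

Lemma stays_nonneg_raise h k s : stays_nonneg h s ->
  stays_nonneg (h + k) s /\ end_height (h + k) s = end_height h s + k.
Proof.
elim: s h => [|[] s IH] h //=; first by move=> /IH; rewrite addSn.
by case: h => [|h] //= /IH.
Qed.

Lemma dyck_raise k s : dyck_from 0 s -> stays_nonneg k s /\ end_height k s = k.
Proof.
by rewrite dyck_fromE => /andP[/(@stays_nonneg_raise 0 k)[? ->] /eqP ->].
Qed.

Lemma dyck_cat s t : dyck_from 0 s -> dyck_from 0 (s ++ t) = dyck_from 0 t.
Proof. by move=> /(dyck_raise 0)[ns e]; rewrite dyck_from_cat ns e. Qed.

Lemma dyck_arch A B :
  dyck_from 0 A -> dyck_from 0 (true :: A ++ false :: B) = dyck_from 0 B.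
Proof. by move=> /(dyck_raise 1)[ns e] /=; rewrite dyck_from_cat ns e. Qed.

Lemma last_dyck s : dyck_from 0 s -> last false s = false.
Proof.
case/lastP: s => [|s []] //; last by rewrite last_rcons.
by rewrite dyck_fromE -cats1 end_height_cat andbF.
Qed.

Lemma dyck_first_descent h k t : dyck_from (h + k).+1 t ->
  exists A B, [/\ t = A ++ false :: B, dyck_from k A & dyck_from h B].
Proof.
elim: t k => [|[] t IH] k //=.
- by rewrite -addnS => /IH[A [B [-> dA dB]]]; exists (true :: A), B.
- case: k => [|k]; first by rewrite addn0; exists [::], t.
  by rewrite addnS /= => /IH[A [B [-> dA dB]]]; exists (false :: A), B.
Qed.

Lemma dyck_first_return s : dyck_from 0 s -> s = [::] \/
  exists A B, [/\ s = true :: A ++ false :: B, dyck_from 0 A & dyck_from 0 B].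
Proof.
case: s => [|[] s] //=; first by left.
by move=> /(@dyck_first_descent 0 0)[A [B [-> dA dB]]]; right; exists A, B.
Qed.

Lemma dyck_last_return s : dyck_from 0 s -> s = [::] \/
  exists E C, [/\ s = E ++ true :: rcons C false, dyck_from 0 E & dyck_from 0 C].
Proof.
have [m] := ubnP (size s); elim: m s => // m IH s lt_s_m /dyck_first_return.
case=> [->|[A [B [eq_s dA dB]]]]; [by left | right].
have lt_B_m : size B < m by move: lt_s_m; rewrite eq_s /= size_cat /=; lia.
have [eq_B|[E [C [eq_B dE dC]]]] := IH B lt_B_m dB.
  by exists [::], A; rewrite eq_s eq_B cats1.
exists (true :: A ++ false :: E), C; split=> //; last by rewrite dyck_arch.
by rewrite eq_s eq_B /= -catA.
Qed.

Lemma dyck_no_early_return E W :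
  dyck_from 0 E -> dyck_from 0 (E ++ true :: W) -> ~~ stays_nonneg 0 W.
Proof.
move=> dE; rewrite dyck_cat //= dyck_fromE => /andP[_ /eqP e].
by apply/negP=> /(@stays_nonneg_raise 0 1)[_]; rewrite e addn1.
Qed.

Lemma dyck_last_return_uniq E E' C C' :
  dyck_from 0 E -> dyck_from 0 E' -> dyck_from 0 C -> dyck_from 0 C' ->
  E ++ true :: C = E' ++ true :: C' -> E = E' /\ C = C'.
Proof.
have split_cat (A B X Y : seq bool) : A ++ B = X ++ Y ->
    (exists W, X = A ++ W /\ B = W ++ Y) \/ (exists W, A = X ++ W /\ Y = W ++ B).
  elim: A X => [|a A IH] [|x X] /=; try by move=> ->; left; eexists.
    by move=> <-; right; exists (a :: A).
  by case=> -> /IH[[W [-> ->]]|[W [-> ->]]]; [left|right]; exists W.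
wlog [W [eE' eC]] : E E' C C' / exists W, E' = E ++ W /\ true :: C = W ++ true :: C'.
  move=> wlog dE dE' dC dC' eq; case/split_cat: (eq) => ex; first exact: wlog.
  by case: (wlog E' E C' C ex dE' dE dC' dC (esym eq)) => -> ->.
rewrite {}eE' => dE dEW dC _ _; case: W eC dEW => [|w W]; first by rewrite cats0 => -[].
case=> <- eC dEW; case/negP: (dyck_no_early_return dE dEW).
by move: dC; rewrite eC dyck_fromE stays_nonneg_cat => /andP[/andP[]].
Qed.

Lemma has_hill_cat h s t : last false s = false ->
  has_hill h (s ++ t) = has_hill h s || has_hill (end_height h s) t.
Proof.
elim: s h => [|[] s IH] h //= ls; last by rewrite IH.
have ls' : last false s = false by case: s ls {IH}.
by rewrite IH // orbA; case: s ls {IH ls'} => [|[] s].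
Qed.

Lemma has_hill_above h s : stays_nonneg h s -> has_hill h.+1 s = false.
Proof. by elim: s h => [|[] s IH] [|h] //= /IH. Qed.

Lemma has_hill_dyck_cat s t :
  dyck_from 0 s -> has_hill 0 (s ++ t) = has_hill 0 s || has_hill 0 t.
Proof.
by move=> ds; rewrite has_hill_cat ?last_dyck //; case: (dyck_raise 0 ds) => _ ->.
Qed.

Lemma has_hill_arch A B : dyck_from 0 A ->
  has_hill 0 (true :: A ++ false :: B) = (A == [::]) || has_hill 0 B.
Proof.
move=> dA; have [[ns _] [_ e1]] := (dyck_raise 0 dA, dyck_raise 1 dA).
rewrite /= has_hill_cat ?last_dyck // has_hill_above // e1.
by case: A dA {ns e1} => [|[]].
Qed.

Lemma dyck_last_hill Q : dyck_from 0 Q -> has_hill 0 Q ->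
  exists X Y, [/\ Q = X ++ [:: true, false & Y], dyck_from 0 X, dyck_from 0 Y
                & ~~ has_hill 0 Y].
Proof.
have [m] := ubnP (size Q); elim: m Q => // m IH Q lt_Q_m /[dup] dQ /dyck_first_return.
case=> [->|[A [B [eq_Q dA dB]]]] //; rewrite eq_Q has_hill_arch //.
have [hB _|hB] := boolP (has_hill 0 B).
- have lt_B_m : size B < m by move: lt_Q_m; rewrite eq_Q /= size_cat /=; lia.
  have [X [Y [eq_B dX dY hY]]] := IH B lt_B_m dB hB.
  exists (true :: A ++ false :: X), Y; split=> //; last by rewrite dyck_arch.
  by rewrite eq_B /= -catA.
- by rewrite orbF => /eqP eA; exists [::], B; rewrite eA.
Qed.

Inductive tree := Leaf | Node of tree & tree.

Definition is_node t := if t is Node _ _ then true else false.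
Fixpoint nodes t := if t is Node e c then (nodes e + nodes c).+1 else 0.
Fixpoint spine t := if t is Node _ c then (spine c).+1 else 0.
Fixpoint left_children t :=
  if t is Node e c then is_node e + left_children e + left_children c else 0.
Fixpoint even_ground_spines t :=
  if t is Node e c then even_ground_spines e && ~~ odd (spine c) else true.

Fixpoint arch_code t : seq bool :=
  if t is Node e c then arch_code e ++ true :: rcons (arch_code c) false else [::].

Lemma arch_code_dyck t : dyck_from 0 (arch_code t).
Proof. by elim: t => [|e IHe c IHc] //=; rewrite dyck_cat // -cats1 dyck_arch. Qed.

Lemma size_arch_code t : size (arch_code t) = 2 * nodes t.
Proof. by elim: t => [|e IHe c IHc] //=; rewrite size_cat /= size_rcons IHe IHc; lia. Qed.

Lemma is_dyck_arch_code n t : is_dyck n (arch_code t) = (nodes t == n).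
Proof. by rewrite /is_dyck size_arch_code arch_code_dyck andbT eqn_pmul2l. Qed.

Lemma arch_code_nil t : (arch_code t == [::]) = ~~ is_node t.
Proof. by case: t => //= e c; case: (arch_code e). Qed.

Lemma last_arch_code t : last true (arch_code t) = ~~ is_node t.
Proof. by case: t => //= e c; rewrite last_cat /= last_rcons. Qed.

Lemma count_valleys_cons a s :
  count_valleys (a :: s) = (~~ a && head false s) + count_valleys s.
Proof. by case: s => /= [|b s]; rewrite ?andbF. Qed.

Lemma count_valleys_cat s t : count_valleys (s ++ t) =
  count_valleys s + count_valleys t + (~~ last true s && head false t).
Proof.
elim: s => [|a s IH]; first by rewrite addn0.
by rewrite cat_cons !count_valleys_cons IH; case: s {IH} => [|b s] /=; lia.
Qed.

Lemma count_valleys_arch_code t : count_valleys (arch_code t) = left_children t.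
Proof.
elim: t => [|e IHe c IHc] //=.
rewrite count_valleys_cat count_valleys_cons -cats1 count_valleys_cat IHe IHc.
by rewrite !last_arch_code negbK /= andbF andbT; lia.
Qed.

Lemma terminal_descent_catU s t : terminal_descent (s ++ true :: t) = terminal_descent t.
Proof.
rewrite /terminal_descent rev_cat rev_cons -cats1 -catA find_cat /=.
by case: ifP => // /negbT no_U; rewrite addn0 hasNfind.
Qed.

Lemma terminal_descent_arch_code t : terminal_descent (arch_code t) = spine t.
Proof.
elim: t => [|e _ c IHc] //=.
by rewrite terminal_descent_catU -IHc /terminal_descent rev_rcons.
Qed.

Definition run_after r (s : seq bool) :=
  foldl (fun r (x : bool) => if x then 0 else r.+1) r s.

Lemma run_after0 s : run_after 0 s = terminal_descent s.
Proof.
elim/last_ind: s => [|s x IH] //.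
by rewrite /run_after foldl_rcons -/(run_after 0 s) IH /terminal_descent rev_rcons; case: x.
Qed.

Lemma ground_descents_catU h r s t : ground_descents h r (s ++ true :: t) =
  ground_descents h r s ++ ground_descents (end_height h s).+1 0 t.
Proof. by elim: s h r => [|[] s IH] h r //=; rewrite IH ?catA. Qed.

Lemma ground_descents_last_arch k r C : dyck_from k C ->
  ground_descents k.+1 r (rcons C false) = [:: (run_after r C).+1].
Proof.
elim: C k r => [|[] C IH] k r /=; first by move=> /eqP ->.
  by rewrite andbF /= => /IH ->.
by case: k => [|k] //= /IH ->.
Qed.

Lemma all_ground_descents_odd_arch_code t :
  all_ground_descents_odd (arch_code t) = even_ground_spines t.
Proof.
elim: t => [|e IHe c _] //=.
rewrite /all_ground_descents_odd ground_descents_catU all_cat.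
rewrite -/(all_ground_descents_odd _) IHe; have [_ ->] := dyck_raise 0 (arch_code_dyck e).
rewrite ground_descents_last_arch ?arch_code_dyck //=.
by rewrite run_after0 terminal_descent_arch_code andbT.
Qed.

Lemma arch_code_inj : injective arch_code.
Proof.
elim=> [|e IHe c IHc] [|e' c'] //=; try by case: (arch_code _).
rewrite -!rcons_cons -!rcons_cat => /(@rcons_injl _ false) /dyck_last_return_uniq.
by case; rewrite ?arch_code_dyck // => /IHe -> /IHc ->.
Qed.

Lemma arch_code_surj P : dyck_from 0 P -> exists t, arch_code t = P.
Proof.
have [m] := ubnP (size P); elim: m P => // m IH P lt_P_m /dyck_last_return.
case=> [->|[E [C [eq_P dE dC]]]]; first by exists Leaf.
have size_EC : size E < m /\ size C < m.
  by move: lt_P_m; rewrite eq_P size_cat /= size_rcons; lia.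
have [[e eE] [c eC]] := (IH E size_EC.1 dE, IH C size_EC.2 dC).
by exists (Node e c); rewrite eq_P -eE -eC.
Qed.

Definition arch_decode P := epsilon (inhabits Leaf) (fun t => arch_code t = P).

Lemma arch_codeK : cancel arch_code arch_decode.
Proof.
move=> t; apply: arch_code_inj.
by apply: (epsilon_spec (inhabits Leaf) (fun s => arch_code s = arch_code t)); exists t.
Qed.

Fixpoint hill_code (t : tree) : seq bool :=
  if t is Node e c then
    (* [code_with x] is [hill_code (Node e x)]; nesting the fixpoint makes the
       recursive call on [Node e e'] structural. *)
    let fix code_with x :=
      if odd (spine x) then
        if x is Node e' c' then true :: code_with e' ++ false :: hill_code c' else [::]
      else hill_code e ++ [:: true, false & hill_code x] in
    code_with c
  else [::].

Lemma hill_code_even e c : ~~ odd (spine c) ->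
  hill_code (Node e c) = hill_code e ++ [:: true, false & hill_code c].
Proof. by case: c => [|e' c'] //= /negbTE ->. Qed.

Lemma hill_code_odd e e' c : ~~ odd (spine c) ->
  hill_code (Node e (Node e' c)) = true :: hill_code (Node e e') ++ false :: hill_code c.
Proof. by move=> /= ->. Qed.

Lemma hill_code_ind (P : tree -> Prop) :
  P Leaf ->
  (forall e c, ~~ odd (spine c) -> P e -> P c -> P (Node e c)) ->
  (forall e e' c, ~~ odd (spine c) -> P (Node e e') -> P c -> P (Node e (Node e' c))) ->
  forall t, P t.
Proof.
move=> PL P_even P_odd t; have [m] := ubnP (nodes t).
elim: m t => // m IH [|e [|e' c]] //= lt_t_m.
  by apply: P_even => //; apply: IH; lia.
have [odd_c|even_c] := boolP (odd (spine c)).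
  by apply: P_even; rewrite /= ?odd_c //; apply: IH => /=; lia.
by apply: P_odd => //; apply: IH => /=; lia.
Qed.

Lemma hill_code_dyck t : dyck_from 0 (hill_code t).
Proof.
elim/hill_code_ind: t => [|e c even_c de dc|e e' c even_c de dc] //.
  by rewrite hill_code_even // dyck_cat // (dyck_arch [::]).
by rewrite hill_code_odd // dyck_arch.
Qed.

Lemma size_hill_code t : size (hill_code t) = 2 * nodes t.
Proof.
elim/hill_code_ind: t => [|e c even_c se sc|e e' c even_c se sc] //.
  by rewrite hill_code_even // size_cat /= se sc /=; lia.
by rewrite hill_code_odd // /= size_cat /= se sc /=; lia.
Qed.

Lemma is_dyck_hill_code n t : is_dyck n (hill_code t) = (nodes t == n).
Proof. by rewrite /is_dyck size_hill_code hill_code_dyck andbT eqn_pmul2l. Qed.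

Lemma hill_code_cons t : is_node t -> exists Y, hill_code t = true :: Y.
Proof.
move=> nt; have := hill_code_dyck t; have := size_hill_code t.
by case: (hill_code t) => [|[] Y]; [case: t nt | exists Y |].
Qed.

Lemma hill_code_last2 t : is_node t ->
  exists X, hill_code t = X ++ [:: spine t == 1; false].
Proof.
elim/hill_code_ind: t => [|e c even_c _ IHc|e e' c even_c IHe' IHc] // _.
- rewrite hill_code_even //; case: c even_c IHc => [|a b] even_c IHc.
    by exists (hill_code e).
  have [X ->] := IHc isT; exists (hill_code e ++ [:: true, false & X]).
  by rewrite -catA; move: even_c => /=; case: (spine b).
- rewrite hill_code_odd //; case: c even_c IHc => [|a b] even_c IHc.
    have [X ->] := IHe' isT.
    by exists (true :: X ++ [:: spine (Node e e') == 1]); rewrite cat_cons -!catA.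
  have [X ->] := IHc isT; exists (true :: hill_code (Node e e') ++ false :: X).
  by rewrite cat_cons -catA; move: even_c => /=; case: (spine b).
Qed.

Lemma hill_code_even_shape t : ~~ odd (spine t) ->
  hill_code t = [::] \/ exists Y, hill_code t = [:: true, true & Y].
Proof.
case: t => [|e [|e' c]] even_t; [by left | by move: even_t | right].
have even_c : ~~ odd (spine c) by move: even_t; rewrite /= negbK.
by rewrite hill_code_odd //; have [Y ->] := @hill_code_cons (Node e e') isT; eexists.
Qed.

Lemma count_DXD_U s : count_DXD (true :: s) = count_DXD s.
Proof. by case: s => [|? [|? ?]]. Qed.

Lemma count_DXD_cons x s :
  count_DXD (x :: s) = (~~ x && ~~ nth true s 1) + count_DXD s.
Proof. by case: s => [|? [|? ?]]; rewrite //= andbF. Qed.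

Lemma count_DXD_cat2 s a b t :
  count_DXD (s ++ [:: a, b & t]) = count_DXD (s ++ [:: a; b]) + count_DXD [:: a, b & t].
Proof.
elim: s => [|x s IH] //; rewrite !cat_cons.
rewrite (count_DXD_cons x (s ++ _)) (count_DXD_cons x (s ++ [:: a; b])) IH addnA.
by case: s {IH} => [|? [|? ?]].
Qed.

Section UUGuard.

Variable Y : seq bool.
Hypothesis Y_UU : Y = [::] \/ exists Z, Y = [:: true, true & Z].

Lemma count_DXD_D_UU : count_DXD (false :: Y) = count_DXD Y.
Proof. by case: Y_UU => [|[Z]] ->. Qed.

Lemma count_DXD_DD_UU x : count_DXD [:: x, false, false & Y] = ~~ x + count_DXD Y.
Proof. by case: Y_UU => [|[Z]] ->; case: x. Qed.

Lemma count_DXD_DUD_UU x : count_DXD [:: x, false, true, false & Y] = 1 + count_DXD Y.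
Proof. by case: Y_UU => [|[Z]] ->; case: x. Qed.

End UUGuard.

Lemma has_hill_hill_code t : has_hill 0 (hill_code t) = odd (spine t).
Proof.
elim/hill_code_ind: t => [|e c even_c _ _|e e' c even_c _ IHc] //.
  by rewrite hill_code_even // has_hill_dyck_cat ?hill_code_dyck //= orbT (negbTE even_c).
rewrite hill_code_odd // has_hill_arch ?hill_code_dyck // IHc -size_eq0 size_hill_code.
by rewrite /= negbK (negbTE even_c).
Qed.

Lemma count_DXD_hill_code t : count_DXD (hill_code t) = left_children t.
Proof.
elim/hill_code_ind: t => [|e c even_c IHe IHc|e e' c even_c IHe' IHc] //.
- have UU_c := hill_code_even_shape even_c.
  rewrite hill_code_even //; case: e IHe => [|a b] IHe.
    by rewrite count_DXD_U (count_DXD_D_UU UU_c) IHc.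
  have [X eX] := @hill_code_last2 (Node a b) isT.
  by rewrite eX -catA count_DXD_cat2 -eX IHe (count_DXD_DUD_UU UU_c) IHc /=; lia.
- rewrite hill_code_odd // count_DXD_U.
  have [X eX] := @hill_code_last2 (Node e e') isT.
  rewrite eX -catA count_DXD_cat2 -eX IHe'.
  rewrite (count_DXD_DD_UU (hill_code_even_shape even_c)) IHc.
  by case: e' {IHe' eX} => [|? ?] /=; lia.
Qed.

Lemma starts_UD_hill_code t :
  starts_UD (hill_code t) = is_node t && even_ground_spines t.
Proof.
elim/hill_code_ind: t => [|e c even_c IHe _|e e' c even_c _ _] //.
- rewrite hill_code_even //= even_c andbT; case: e IHe => [|a b] IHe.
    by rewrite /starts_UD /= take0.
  rewrite /starts_UD takel_cat -/(starts_UD _) ?IHe // size_hill_code /=; lia.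
- rewrite hill_code_odd //; have [Y ->] := @hill_code_cons (Node e e') isT.
  by rewrite /= negbK (negbTE even_c) andbF.
Qed.

Lemma hill_code_surj Q : dyck_from 0 Q -> exists t, hill_code t = Q.
Proof.
have [m] := ubnP (size Q); elim: m Q => // m IH Q lt_Q_m dQ.
have [hQ|hQ] := boolP (has_hill 0 Q).
- have [X [Y [eQ dX dY hY]]] := dyck_last_hill dQ hQ.
  have size_XY : size X < m /\ size Y < m by move: lt_Q_m; rewrite eQ size_cat /=; lia.
  have [[e eX] [c eY]] := (IH X size_XY.1 dX, IH Y size_XY.2 dY).
  have even_c : ~~ odd (spine c) by rewrite -has_hill_hill_code eY.
  by exists (Node e c); rewrite hill_code_even // eX eY eQ.
- have [eQ|[A [B [eQ dA dB]]]] := dyck_first_return dQ; first by exists Leaf; rewrite eQ.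
  move: hQ; rewrite eQ has_hill_arch // negb_or => /andP[nA hB].
  have size_AB : size A < m /\ size B < m by move: lt_Q_m; rewrite eQ /= size_cat /=; lia.
  have [[[|e e'] eA] [c eB]] := (IH A size_AB.1 dA, IH B size_AB.2 dB).
    by rewrite -eA in nA.
  have even_c : ~~ odd (spine c) by rewrite -has_hill_hill_code eB.
  by exists (Node e (Node e' c)); rewrite hill_code_odd // eA eB.
Qed.

Lemma uniq_map_inj_in (T rT : eqType) (f : T -> rT) s :
  uniq (map f s) -> {in s &, injective f}.
Proof.
move=> uniq_fs x y xs ys fxy.
rewrite -(nth_index x xs) -(nth_index x ys); congr nth.
apply: (uniqP (f x) uniq_fs); rewrite ?unfold_in /= ?size_map ?index_mem //.
by rewrite !(nth_map x) ?index_mem // !nth_index.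
Qed.

Lemma onto_in_inj (T : eqType) (f : T -> T) s :
  uniq s -> {subset s <= map f s} -> {in s &, injective f}.
Proof.
move=> uniq_s sub; apply/uniq_map_inj_in/(leq_size_uniq uniq_s sub).
by rewrite size_map.
Qed.

Definition dyck_paths n :=
  [seq s <- map val (enum {: (2 * n).-tuple bool}) | is_dyck n s].

Lemma mem_dyck_paths n s : (s \in dyck_paths n) = is_dyck n s.
Proof.
rewrite mem_filter andb_idr // => /andP[/eqP size_s _].
by apply/mapP; exists (Tuple (introT eqP size_s)); rewrite ?mem_enum.
Qed.

Lemma uniq_dyck_paths n : uniq (dyck_paths n).
Proof. by rewrite filter_uniq // map_inj_uniq ?enum_uniq //; apply: val_inj. Qed.

Definition hill_recode P := hill_code (arch_decode P).

Lemma hill_recode_arch_code t : hill_recode (arch_code t) = hill_code t.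
Proof. by rewrite /hill_recode arch_codeK. Qed.

Lemma is_dyck_hill_recode n P : is_dyck n P -> is_dyck n (hill_recode P).
Proof.
move=> /[dup] /andP[_ /arch_code_surj[t <-]].
by rewrite hill_recode_arch_code is_dyck_arch_code is_dyck_hill_code.
Qed.

Lemma hill_recode_surj n Q : is_dyck n Q -> exists2 P, is_dyck n P & hill_recode P = Q.
Proof.
move=> /[dup] /andP[_ /hill_code_surj[t <-]] dQ; exists (arch_code t).
  by rewrite is_dyck_arch_code -is_dyck_hill_code.
exact: hill_recode_arch_code.
Qed.

Lemma hill_recode_inj n P Q : is_dyck n P -> is_dyck n Q ->
  hill_recode P = hill_recode Q -> P = Q.
Proof.
move=> dP dQ; apply: (onto_in_inj (uniq_dyck_paths n)); rewrite ?mem_dyck_paths //.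
move=> R; rewrite mem_dyck_paths => /hill_recode_surj[S dS <-].
by rewrite map_f ?mem_dyck_paths.
Qed.

Lemma hill_recode_stats P : dyck_from 0 P ->
  [/\ count_DXD (hill_recode P) = count_valleys P,
      has_hill 0 (hill_recode P) = odd (terminal_descent P)
    & starts_UD (hill_recode P) = (P != [::]) && all_ground_descents_odd P].
Proof.
move=> /arch_code_surj[t <-]; rewrite hill_recode_arch_code.
rewrite count_DXD_hill_code count_valleys_arch_code has_hill_hill_code.
rewrite terminal_descent_arch_code starts_UD_hill_code arch_code_nil negbK.
by rewrite all_ground_descents_odd_arch_code.
Qed.

Theorem mainTheorem6 (n : nat) :
  exists phi : seq bool -> seq bool,
  [/\ (* phi is a bijection from the set of Dyck n-paths to itself *)
      [/\ forall P, is_dyck n P -> is_dyck n (phi P),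
          forall P Q, is_dyck n P -> is_dyck n Q -> phi P = phi Q -> P = Q
        & forall Q, is_dyck n Q -> exists2 P, is_dyck n P & phi P = Q],
      (* (1) *)
      forall P, is_dyck n P -> count_valleys P = count_DXD (phi P),
      (* (2) restriction: even terminal descent  -->  onto hill-free *)
      (forall P, is_dyck n P -> ~~ odd (terminal_descent P) -> hill_free (phi P))
        /\ (forall Q, is_dyck n Q -> hill_free Q ->
              exists2 P, is_dyck n P /\ ~~ odd (terminal_descent P) & phi P = Q)
    & (* (3) restriction: nonempty, all ground descents odd  -->  onto starting UD *)
      (forall P, is_dyck n P -> P != [::] -> all_ground_descents_odd P ->
           starts_UD (phi P))
        /\ (forall Q, is_dyck n Q -> starts_UD Q ->
              exists2 P, [/\ is_dyck n P, P != [::] & all_ground_descents_odd P]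
                       & phi P = Q)].
Proof.
have stats P : is_dyck n P -> _ := fun dP => hill_recode_stats (proj2 (andP dP)).
exists hill_recode; split.
- split; [exact: is_dyck_hill_recode | exact: hill_recode_inj | exact: hill_recode_surj].
- by move=> P /stats[].
- split=> [P /stats[_ hP _] even_P | Q /hill_recode_surj[P dP <-]].
    by rewrite /hill_free hP.
  by rewrite /hill_free; case: (stats P dP) => _ -> _ even_P; exists P.
- split=> [P /stats[_ _ sP] nP oP | Q /hill_recode_surj[P dP <-]].
    by rewrite sP nP oP.
  by case: (stats P dP) => _ _ -> /andP[nP oP]; exists P.
Qed.
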